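(* Let $H$ be a finite graph with edges $e_1,\dots,e_m$. For each edge $e_i$ let $\theta_{e_i}\colon\{0,1\}^m\to\{0,1\}^m$ be the map flipping the $i$-th coordinate and fixing all others. Let $H'$ be the graph with vertex set $V(H)\times\{0,1\}^m$ and edge set $\{\{(u,\mathbf x),(v,\theta_{uv}(\mathbf x))\}: uv\in E(H),\ \mathbf x\in\{0,1\}^m\}$. If $H$ contains a cycle, then the girth of $H'$ is at least twice the girth of $H$.
   Context: The girth of a graph is the length of its shortest cycle (infinite if the graph is acyclic). *)

From mathcomp Require Import all_boot.
Set Implicit Arguments. Unset Strict Implicit. Unset Printing Implicit Defensive.

(* A finite simple graph: vertex type T : finType, adjacency e : rel T,
   assumed symmetric and irreflexive in the theorem. *)

Definition has_cycle_len (T : finType) (e : rel T) (k : nat) : bool :=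
  [exists t : k.-tuple T, [&& 2 < k, uniq t & cycle e t]].

(* girth: length of a shortest cycle; None = infinite (acyclic).
   Cycles have length <= #|T| (distinct vertices), so searching 0..#|T|
   suffices; since iota starts at 0, the index found is the length. *)
Definition girth (T : finType) (e : rel T) : option nat :=
  let n := find (has_cycle_len e) (iota 0 #|T|.+1) in
  if n <= #|T| then Some n else None.

Definition ge_ext (o : option nat) (n : nat) : Prop :=
  if o is Some g then n <= g else True.

Definition edgeset (T : finType) (e : rel T) : {set {set T}} :=
  [set [set x.1; x.2] | x in [set x : T * T | e x.1 x.2]].

(* Coordinates of {0,1}^E(H) are indexed by the edges of H themselves. *)
Notation edge_t e := {A : {set _} | A \in edgeset e}.

Definition theta (T : finType) (e : rel T) (u v : T)
    (x : {ffun edge_t e -> bool}) : {ffun edge_t e -> bool} :=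
  [ffun f => x f (+) (val f == [set u; v])].
Arguments theta {T} e u v x.

Definition lift_rel (T : finType) (e : rel T) :
    rel (T * {ffun edge_t e -> bool}) :=
  fun p q => e p.1 q.1 && (q.2 == theta e p.1 q.1 p.2).
Arguments lift_rel {T} e.

From mathcomp Require Import all_boot zify.
Set Implicit Arguments. Unset Strict Implicit. Unset Printing Implicit Defensive.

(* A shortest cycle of H' is a closed walk P_0, ..., P_L = P_0 with pairwise
   distinct vertices. Its projection u_k = (P_k).1 is a closed walk in H with
   two key properties:
   - every edge of H occurs an even number of times in it, because the
     coordinate of {0,1}^E(H) indexed by that edge is flipped exactly when
     the edge is traversed and returns to its initial value (parity lemma);
   - it never backtracks, because flipping the same coordinate twice returns
     to the same vertex of H', contradicting simplicity.
   Take the first repetition u_i = u_j of the projection. Since there is no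
   loop and no backtracking, j - i >= 3, so u_i, ..., u_(j-1) is a cycle of H
   of length c = j - i with c distinct edges. Each of them occurs at least
   once, hence (by parity) at least twice, among the L edges of the walk, so
   2c <= L and thus 2 girth(H) <= 2c <= girth(H'). *)

Section Girth.
Variables (T : finType) (r : rel T).

Lemma girth_cycle n : girth r = Some n -> has_cycle_len r n.
Proof.
rewrite /girth; case: ifP => // le_n [<-].
have has_cyc : has (has_cycle_len r) (iota 0 #|T|.+1).
  by rewrite has_find size_iota ltnS.
by have := nth_find 0 has_cyc; rewrite nth_iota ?add0n // ltnS.
Qed.

Lemma girth_le g c : girth r = Some g -> has_cycle_len r c -> g <= c.
Proof.
rewrite /girth; set n := find _ _; case: ifP => // le_n [<-] cyc_c.
rewrite leqNgt; apply/negP => lt_c.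
have := before_find 0 lt_c; rewrite nth_iota ?add0n ?cyc_c //.
by rewrite ltnS (leq_trans (ltnW lt_c) le_n).
Qed.

End Girth.

Definition closed_walk (T : Type) (r : rel T) (L : nat) (P : nat -> T) : Prop :=
  (forall k, k < L -> r (P k) (P k.+1)) /\ P L = P 0.

Definition simple_on (T : Type) (L : nat) (P : nat -> T) : Prop :=
  forall a b, a < L -> b < L -> P a = P b -> a = b.

Lemma cycle_closed_walk (T : finType) (r : rel T) L :
  has_cycle_len r L -> 2 < L /\ exists P, closed_walk r L P /\ simple_on L P.
Proof.
case/existsP=> t /and3P[L_gt2 t_uniq t_cycle]; split => //.
have size_t := size_tuple t.
case: (tval t) size_t t_uniq t_cycle => [|x s] size_t t_uniq t_cycle.
  by rewrite -size_t in L_gt2.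
exists (fun k => nth x (x :: rcons s x) k); split; first split.
- move=> k lt_kL; move/(pathP x): t_cycle; apply.
  by move: lt_kL; rewrite size_rcons -size_t.
- by rewrite -size_t /= nth_rcons ltnn eqxx.
- move=> a b lt_aL lt_bL.
  rewrite -rcons_cons !nth_rcons size_t lt_aL lt_bL => /eqP.
  by rewrite nth_uniq ?size_t // => /eqP.
Qed.

Lemma closed_walk_cycle (T : finType) (r : rel T) c (f : nat -> T) :
  2 < c -> closed_walk r c f -> simple_on c f -> has_cycle_len r c.
Proof.
move=> c_gt2 [f_edge f_closed] f_simple.
have size_f : size (mkseq f c) == c by rewrite size_mkseq.
apply/existsP; exists (Tuple size_f); apply/and3P; split => //=.
  rewrite map_inj_in_uniq ?iota_uniq // => a b.
  by rewrite !mem_iota; exact: f_simple.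
case: c c_gt2 f_edge f_closed {size_f f_simple} => // c _ f_edge f_closed.
rewrite /mkseq /= -[in rcons _ _]f_closed.
have -> : rcons [seq f i | i <- iota 1 c] (f c.+1) = [seq f i | i <- iota 1 c.+1].
  by rewrite -cats1 -(addn1 c) iotaD map_cat add1n addn1.
apply/(pathP (f 0)) => k; rewrite size_map size_iota => lt_kc.
rewrite -[f 0 :: _]/([seq f i | i <- iota 0 c.+2]).
rewrite (nth_map 0) ?size_iota 1?ltnW // (nth_map 0) ?size_iota //.
by rewrite !nth_iota ?add1n ?f_edge // ltnW.
Qed.

Lemma first_repeat (T : eqType) (u : nat -> T) L :
  0 < L -> u L = u 0 ->
  exists i j, [/\ i < j <= L, u i = u j & simple_on j u].
Proof.
move=> L_gt0 u_closed.
pose repeats j := (j <= L) && has (fun a => u a == u j) (iota 0 j).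
have [|j /andP[le_jL /hasP[i]]] := ex_minnP (ex_intro repeats L _).
  by rewrite /repeats leqnn; apply/hasP; exists 0; rewrite ?mem_iota ?u_closed.
rewrite mem_iota add0n => /= lt_ij /eqP u_ij j_min.
exists i, j; split => //; first by rewrite lt_ij.
suff inj_lt a b : a < b < j -> u a <> u b.
  move=> a b lt_aj lt_bj u_ab; case: (ltngtP a b) => // [lt_ab|lt_ba].
  - by case: (inj_lt a b); rewrite ?lt_ab.
  - by case: (inj_lt b a); rewrite ?lt_ba.
move=> /andP[lt_ab lt_bj] u_ab.
have : repeats b.
  rewrite /repeats (leq_trans (ltnW lt_bj)) //.
  by apply/hasP; exists a; rewrite ?mem_iota ?u_ab.
by move/j_min; rewrite leqNgt lt_bj.
Qed.

Definition walk_edges (T : finType) (u : nat -> T) (n : nat) : seq {set T} :=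
  [seq [set u k; u k.+1] | k <- iota 0 n].

Lemma uniq_cycle_edges (T : finType) (f : nat -> T) c :
  2 < c -> f c = f 0 -> simple_on c f -> uniq (walk_edges f c).
Proof.
move=> c_gt2 f_closed f_simple.
rewrite /walk_edges map_inj_in_uniq ?iota_uniq // => a b.
rewrite !mem_iota /= => lt_ac lt_bc.
wlog lt_ab : a b lt_ac lt_bc / a < b.
  move=> W E; case: (ltngtP a b) => // [lt_ab|lt_ba]; first exact: W.
  by apply/esym/W.
move=> E; have : f a \in [set f b; f b.+1] by rewrite -E set21.
case/set2P => [/f_simple | fab1]; first by move=> /(_ lt_ac lt_bc) ->.
have [lt_b1c | | eq_b1c] := ltngtP b.+1 c; [| lia |].
  by move/f_simple: fab1 => /(_ lt_ac lt_b1c); lia.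
have a0 : a = 0 by apply: f_simple; rewrite ?fab1 ?eq_b1c //; lia.
have : f a.+1 \in [set f b; f b.+1] by rewrite -E set22.
rewrite eq_b1c f_closed -a0 => /set2P[/f_simple | /f_simple]; lia.
Qed.

Lemma double_count (T : eqType) (s t : seq T) :
  uniq s -> {in s, forall x, 1 < count_mem x t} -> 2 * size s <= size t.
Proof.
move=> s_uniq s_twice.
have /count_subseqP[s' sub_s't perm_ss'] :
    forall x, count_mem x (s ++ s) <= count_mem x t.
  move=> x; rewrite count_cat count_uniq_mem //.
  case: (boolP (x \in s)) => // /s_twice.
  by rewrite addnn -mul2n.
by rewrite mul2n -addnn -size_cat (perm_size perm_ss') size_subseq.
Qed.

Section Lift.
Variables (T : finType) (e : rel T).
Hypothesis e_irr : irreflexive e.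

Local Notation vertex := (T * {ffun edge_t e -> bool})%type.

(* A walk in H' cannot return along the edge it just used: the second
   traversal flips the same coordinate back. *)
Lemma lift_no_backtrack (p q w : vertex) :
  lift_rel e p q -> lift_rel e q w -> w.1 = p.1 -> w = p.
Proof.
move=> /andP[_ /eqP q2] /andP[_ /eqP w2] w1.
apply: injective_projections => //; rewrite w2 q2 w1.
apply/ffunP => f; rewrite /theta !ffunE setUC -addbA.
by rewrite addbb addbF.
Qed.

(* Parity lemma: the projection of a closed walk of H' uses every edge of H an
   even number of times, since the coordinate of that edge must return to its
   initial value. *)
Lemma lift_walk_edges_even L (P : nat -> vertex) :
  closed_walk (lift_rel e) L P ->
  forall A, A \in edgeset e -> ~~ odd (count_mem A (walk_edges (fun k => (P k).1) L)).
Proof.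
move=> [P_edge P_closed] A A_edge; pose f : edge_t e := exist _ A A_edge.
have coord n : n <= L ->
    (P n).2 f = (P 0).2 f (+) odd (count_mem A (walk_edges (fun k => (P k).1) n)).
  elim: n => [|n IHn] lt_nL; first by rewrite /= addbF.
  have /andP[_ /eqP ->] := P_edge n lt_nL.
  rewrite /theta ffunE (IHn (ltnW lt_nL)) /walk_edges -addn1 iotaD map_cat count_cat.
  by rewrite /= add0n addn0 addn1 oddD oddb addbA [_ == A]eq_sym.
by move: (coord L (leqnn L)); rewrite P_closed -{1}[(P 0).2 f]addbF => /addbI <-.
Qed.

(* In the projection of a simple closed walk of H' of length > 2, two equal
   vertices are at least 3 steps apart: 1 step would be a loop, 2 steps a
   backtrack, which would repeat a vertex of H'. *)
Lemma lift_repeat_far L (P : nat -> vertex) :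
  2 < L -> closed_walk (lift_rel e) L P -> simple_on L P ->
  forall i j, i < j <= L -> (P i).1 = (P j).1 -> i.+2 < j.
Proof.
move=> L_gt2 [P_edge P_closed] P_simple i j /andP[lt_ij le_jL] P_ij.
rewrite ltnNge; apply/negP => le_j.
have lt_iL : i < L := leq_trans lt_ij le_jL.
have [j_eq | j_eq] : j = i.+1 \/ j = i.+2 by lia.
  by have /andP[] := P_edge i lt_iL; rewrite -j_eq -P_ij e_irr.
have P_ji : P j = P i.
  rewrite j_eq; apply: lift_no_backtrack (P_edge i lt_iL) (P_edge i.+1 _) _.
    by rewrite -j_eq.
  by rewrite -j_eq P_ij.
have [lt_jL | j_L] : j < L \/ j = L by lia.
  by have := P_simple j i lt_jL lt_iL P_ji; lia.
have i0 : i = 0 by apply: P_simple => //; [lia | rewrite -P_ji j_L P_closed].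
lia.
Qed.

Lemma lift_cycle_double L (P : nat -> vertex) :
  2 < L -> closed_walk (lift_rel e) L P -> simple_on L P ->
  exists2 c, has_cycle_len e c & 2 * c <= L.
Proof.
move=> L_gt2 P_walk P_simple; have [P_edge P_closed] := P_walk.
pose u k := (P k).1.
have [i [j [/andP[lt_ij le_jL] u_ij u_simple]]] :=
  first_repeat (u := u) (ltnW (ltnW L_gt2)) (congr1 fst P_closed).
have c_gt2 : 2 < j - i.
  have := lift_repeat_far L_gt2 P_walk P_simple (i := i) (j := j).
  by rewrite lt_ij le_jL => /(_ isT u_ij); lia.
move: (j - i) c_gt2 (subnKC (ltnW lt_ij)) => c c_gt2 j_def.
rewrite -{}j_def in lt_ij le_jL u_ij u_simple.
pose f k := u (i + k).
have f_edge k : k < c -> e (f k) (f k.+1).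
  by move=> lt_kc; rewrite /f addnS; have /andP[] := P_edge (i + k) (ltac:(lia)).
have f_closed : f c = f 0 by rewrite /f addn0.
have f_simple : simple_on c f.
  move=> a b lt_ac lt_bc f_ab.
  by have := u_simple (i + a) (i + b) (ltac:(lia)) (ltac:(lia)) f_ab; lia.
exists c; first exact: closed_walk_cycle c_gt2 (conj f_edge f_closed) f_simple.
have twice : {in walk_edges f c, forall x, 1 < count_mem x (walk_edges u L)}.
  move=> x /mapP[k]; rewrite mem_iota => lt_kc ->.
  have in_walk : [set f k; f k.+1] \in walk_edges u L.
    by apply/mapP; exists (i + k); rewrite ?mem_iota /f ?addnS //; lia.
  have in_E : [set f k; f k.+1] \in edgeset e.
    by apply/imsetP; exists (f k, f k.+1); rewrite ?inE ?f_edge.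
  have even := lift_walk_edges_even P_walk in_E.
  move: in_walk even; rewrite -has_pred1 has_count.
  by case: (count _ _) => [|[|n]].
have := double_count (uniq_cycle_edges c_gt2 f_closed f_simple) twice.
by rewrite !size_map !size_iota.
Qed.
End Lift.

Theorem mainTheorem8 (T : finType) (e : rel T)
    (e_sym : symmetric e) (e_irr : irreflexive e) :
  (exists k, has_cycle_len e k) ->
  forall g, girth e = Some g -> ge_ext (girth (lift_rel e)) (2 * g).
Proof.
move=> _ g girth_g.
case girth_L: (girth (lift_rel e)) => [L|] //=.
have [L_gt2 [P [P_walk P_simple]]] := cycle_closed_walk (girth_cycle girth_L).
have [c cycle_c le_2c_L] := lift_cycle_double e_irr L_gt2 P_walk P_simple.
by rewrite (leq_trans _ le_2c_L) // leq_mul2l (girth_le girth_g cycle_c) orbT.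
Qed.
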